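(* Let $u$ be a positive entire radial solution of $$\Delta^3u=-\frac{1}{u^3}\quad\text{in }\mathbb{R}^3,$$ and assume that $\Delta^2u(\infty):=\lim_{r\to\infty}\Delta^2u(r)>0$. Then there exists a positive entire radial solution $v$ of the same equation such that $$v(0)=u(0),\qquad \Delta v(0)<\Delta u(0),\qquad \Delta^2v(0)=\Delta^2u(0).$$
   Context: A radial function on $\mathbb{R}^3$ is written $u(r)$, $r=|x|$; for radial functions $\Delta w=w''+\frac{2}{r}w'$. An entire solution is a smooth solution defined on all of $\mathbb{R}^3$. For a positive entire radial solution, $\Delta^2u$ is monotone decreasing in $r$, so the limit $\Delta^2u(\infty)$ exists. *)

From Stdlib Require Import Reals.
From Coquelicot Require Import Coquelicot.
Open Scope R_scope.

(* A radial function on R^3 is represented by its profile U : R -> R,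
   u(x) = U(|x|).  u is smooth on R^3 iff U extends to an even C^infinity
   function on R; we use this even extension. *)
Definition smooth (f : R -> R) : Prop := forall (n : nat) (x : R), ex_derive_n f n x.
Definition even_fun (f : R -> R) : Prop := forall r, f (- r) = f r.

(* Radial Laplacian in R^3: w'' + (2/r) w'.  At r = 0 the value is the
   value of the (continuous) Laplacian at the origin, namely 3 w''(0)
   for a smooth even profile w. *)
Definition radLap (w : R -> R) (r : R) : R :=
  if Req_EM_T r 0 then 3 * Derive_n w 2 0
  else Derive_n w 2 r + 2 / r * Derive w r.

Definition pos_entire_radial_solution (u : R -> R) : Prop :=
  even_fun u /\ smooth u /\ (forall r, 0 < u r) /\
  (forall r, 0 <= r -> radLap (radLap (radLap u)) r = - / (u r ^ 3)).

From Stdlib Require Import Reals Lra Lia Factorial.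
From Coquelicot Require Import Coquelicot.
Open Scope R_scope.

(* Write a radial profile as v(r) = W(r) / r with W odd.  Then
   Delta v = W'' / r, so Delta^3 v = - v^-3 becomes W^(6)(r) = - r / v(r)^3.
   For the given solution u put W_u = r u.  Since Delta^2 u decreases to a
   positive limit, two integrations give u(r) >= m (1 + r)^4.  The new
   solution comes from Picard iteration, started at W_u, on
     W = W_u - delta r^3 + I^6 (Phi W - Phi W_u),
   where I integrates from 0 and Phi W (t) = - t / max (W t / t, u t / 2)^3.
   The truncated Phi is Lipschitz with constant 48 / u^4 <= 48 / (m^4 (1 + t)^16).
   Hence the map contracts in the sup norm with weight
   t (1 + t)^4 exp (A atan t).  For small delta the fixed point stays within
   t u(t) / 2 of W_u, so the truncation is inactive and v = W / r solves the
   equation.  Its Taylor coefficients at 0 of orders 1 and 5 are those of W_u,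
   while order 3 drops by 6 delta: v(0) = u(0), Delta^2 v(0) = Delta^2 u(0)
   and Delta v(0) = Delta u(0) - 6 delta. *)

Lemma continuous_of_ex_derive (f : R -> R) x : ex_derive f x -> continuous f x.
Proof. exact (@ex_derive_continuous R_AbsRing R_NormedModule f x). Qed.

Lemma continuity_pt_of_continuous (f : R -> R) x : continuous f x -> continuity_pt f x.
Proof. apply continuity_pt_filterlim. Qed.

Lemma ex_RInt_of_continuous (f : R -> R) a b :
  (forall x, continuous f x) -> ex_RInt f a b.
Proof. intros H. apply (ex_RInt_continuous (V := R_CompleteNormedModule)); auto. Qed.

Definition odd_fun (f : R -> R) : Prop := forall r, f (- r) = - f r.

Lemma odd_fun_0 f : odd_fun f -> f 0 = 0.
Proof. intros H. specialize (H 0). rewrite Ropp_0 in H. lra. Qed.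

(** * Functions of class C^n *)

Fixpoint Cn (n : nat) (f : R -> R) : Prop :=
  match n with
  | O => forall x, continuous f x
  | S n => (forall x, ex_derive f x) /\ Cn n (Derive f)
  end.

Lemma Cn_ext n : forall f g, (forall x, f x = g x) -> Cn n f -> Cn n g.
Proof.
  induction n; simpl; intros f g H Hf.
  - intros x. eapply continuous_ext; eauto.
  - destruct Hf as [H1 H2]; split.
    + intros x; eapply ex_derive_ext; eauto.
    + apply (IHn (Derive f)); auto. intros; apply Derive_ext; auto.
Qed.

Lemma Cn_pred n : forall f, Cn (S n) f -> Cn n f.
Proof.
  induction n; simpl; intros f [H1 H2].
  - intros x; apply continuous_of_ex_derive; auto.
  - split; auto.
Qed.

Lemma Cn_le m n f : (m <= n)%nat -> Cn n f -> Cn m f.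
Proof. induction 1; auto. intros H'; apply IHle, Cn_pred; auto. Qed.

Lemma Cn_continuous n f : Cn n f -> forall x, continuous f x.
Proof. intros H; apply (Cn_le 0 n); auto; lia. Qed.

Lemma Cn_const n : forall c, Cn n (fun _ => c).
Proof.
  induction n; simpl; intros c.
  - intros; apply continuous_const.
  - split; [intros; apply ex_derive_const|].
    apply (Cn_ext n (fun _ => 0)); [intros; rewrite Derive_const; auto | apply IHn].
Qed.

Lemma Cn_id n : Cn n (fun x => x).
Proof.
  destruct n; simpl.
  - intros; apply continuous_id.
  - split; [intros; apply ex_derive_id|].
    apply (Cn_ext n (fun _ => 1)); [intros; rewrite <- (Derive_id x); reflexivity | apply Cn_const].
Qed.

Lemma Cn_plus n : forall f g, Cn n f -> Cn n g -> Cn n (fun x => f x + g x).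
Proof.
  induction n; simpl; intros f g Hf Hg.
  - intros x; apply (continuous_plus f g); auto.
  - destruct Hf as [Hf1 Hf2]; destruct Hg as [Hg1 Hg2]; split.
    + intros x; apply (ex_derive_plus f g); auto.
    + apply (Cn_ext n (fun x => Derive f x + Derive g x)).
      * intros; rewrite Derive_plus; auto.
      * apply IHn; auto.
Qed.

Lemma Cn_mult n : forall f g, Cn n f -> Cn n g -> Cn n (fun x => f x * g x).
Proof.
  induction n; simpl; intros f g Hf Hg.
  - intros x; apply (continuous_mult f g); auto.
  - destruct Hf as [Hf1 Hf2]; destruct Hg as [Hg1 Hg2]; split.
    + intros x; apply ex_derive_mult; auto.
    + apply (Cn_ext n (fun x => Derive f x * g x + f x * Derive g x)).
      * intros; rewrite Derive_mult; auto.
      * apply Cn_plus; apply IHn; auto; apply Cn_pred; simpl; auto.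
Qed.

Lemma Cn_scal n c f : Cn n f -> Cn n (fun x => c * f x).
Proof. intros; apply (Cn_mult n (fun _ => c) f); auto; apply Cn_const. Qed.

Lemma Cn_minus n f g : Cn n f -> Cn n g -> Cn n (fun x => f x - g x).
Proof.
  intros. apply (Cn_ext n (fun x => f x + (-1) * g x)); [intros; ring|].
  apply Cn_plus; auto. apply Cn_scal; auto.
Qed.

Lemma Cn_pow n k : Cn n (fun x => x ^ k).
Proof.
  induction k; simpl.
  - apply Cn_const.
  - apply Cn_mult; auto. apply Cn_id.
Qed.

Lemma Cn_inv n : forall f, (forall x, f x <> 0) -> Cn n f -> Cn n (fun x => / f x).
Proof.
  induction n; simpl; intros f Hnz Hf.
  - intros x; apply continuous_Rinv_comp; auto.
  - destruct Hf as [Hf1 Hf2]; split.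
    + intros x. eexists; apply is_derive_inv; [apply Derive_correct; auto | auto].
    + apply (Cn_ext n (fun x => (-1) * (Derive f x * ((/ f x) * (/ f x))))).
      * intros; rewrite Derive_inv; auto. field. auto.
      * apply Cn_scal, Cn_mult; auto.
        apply Cn_mult; apply IHn; auto; apply Cn_pred; simpl; auto.
Qed.

Lemma Cn_ex_derive_Derive_n n : forall f, Cn (S n) f -> forall x, ex_derive (Derive_n f n) x.
Proof.
  induction n; intros f Hf x.
  - destruct Hf; simpl; auto.
  - destruct Hf as [_ H2].
    apply (ex_derive_ext (Derive_n (Derive f) n)).
    + intros t. rewrite <- Nat.add_1_r, <- (Derive_n_comp f n 1 t); reflexivity.
    + apply IHn. exact H2.
Qed.

Lemma Cn_ex_derive_n n f : Cn n f -> forall k x, (k <= n)%nat -> ex_derive_n f k x.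
Proof.
  intros H k x Hk. destruct k; [simpl; auto|].
  apply Cn_ex_derive_Derive_n, (Cn_le (S k) n); auto.
Qed.

Lemma smooth_of_Cn f : (forall n, Cn n f) -> smooth f.
Proof.
  intros H n x. destruct n; [simpl; auto|].
  apply Cn_ex_derive_Derive_n; auto.
Qed.

Lemma smooth_Derive f : smooth f -> smooth (Derive f).
Proof.
  intros H n x. destruct n; [simpl; auto|].
  apply (ex_derive_ext (Derive_n f (S n))).
  - intros t. rewrite <- Nat.add_1_r, <- (Derive_n_comp f n 1 t). reflexivity.
  - apply (H (S (S n))).
Qed.

Lemma smooth_ex_derive f : smooth f -> forall x, ex_derive f x.
Proof. intros H x. apply (H 1%nat). Qed.

Lemma smooth_continuous f : smooth f -> forall x, continuous f x.
Proof. intros H x. apply continuous_of_ex_derive, smooth_ex_derive; auto. Qed.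

Lemma Cn_of_smooth n : forall f, smooth f -> Cn n f.
Proof.
  induction n; intros f H.
  - exact (smooth_continuous f H).
  - split; [apply smooth_ex_derive; auto | apply IHn, smooth_Derive; auto].
Qed.

(** * Iterated primitives *)

Definition prim (psi : R -> R) (r : R) : R := RInt psi 0 r.

Definition primn (k : nat) : (R -> R) -> R -> R := Nat.iter k prim.

Lemma is_derive_prim psi : Cn 0 psi -> forall r, is_derive (prim psi) r (psi r).
Proof.
  intros Hc r. apply (is_derive_RInt (V := R_CompleteNormedModule) psi (prim psi) 0 r).
  - apply filter_forall. intros b. apply (RInt_correct (V := R_CompleteNormedModule)).
    apply ex_RInt_of_continuous; auto.
  - auto.
Qed.

Lemma prim_0 psi : prim psi 0 = 0.
Proof. unfold prim. rewrite RInt_point. reflexivity. Qed.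

Lemma Cn_prim n psi : Cn n psi -> Cn (S n) (prim psi).
Proof.
  intros H. assert (Hc := Cn_continuous n psi H). split.
  - intros r; eexists; apply is_derive_prim; auto.
  - apply (Cn_ext n psi); auto.
    intros; symmetry; apply is_derive_unique, is_derive_prim; auto.
Qed.

Lemma Cn_primn k n psi : Cn n psi -> Cn (k + n) (primn k psi).
Proof. intros H. induction k; simpl; auto. apply Cn_prim; auto. Qed.

Lemma primn_continuous k psi : Cn 0 psi -> Cn 0 (primn k psi).
Proof. intros H. apply (Cn_le 0 (k + 0)); [lia | apply Cn_primn; auto]. Qed.

Lemma Derive_n_primn k j g x : Cn 0 g -> (j <= k)%nat ->
  Derive_n (primn k g) j x = primn (k - j) g x.
Proof.
  intros C. revert j x. induction k; intros j x Hj.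
  - replace j with 0%nat by lia. reflexivity.
  - destruct j as [|j]; [reflexivity|].
    replace (S j) with (j + 1)%nat by lia. rewrite <- Derive_n_comp.
    rewrite (Derive_n_ext _ (primn k g)).
    + rewrite IHk by lia. f_equal; lia.
    + intros t. apply is_derive_unique, is_derive_prim, primn_continuous; auto.
Qed.

Lemma primn_minus k f g : Cn 0 f -> Cn 0 g ->
  forall x, primn k (fun t => f t - g t) x = primn k f x - primn k g x.
Proof.
  intros Cf Cg. induction k; intros x; [reflexivity|].
  simpl. unfold prim at 1. rewrite (RInt_ext _ (fun t => primn k f t - primn k g t)).
  - apply (RInt_minus (V := R_CompleteNormedModule));
      apply ex_RInt_of_continuous, primn_continuous; auto.
  - intros; apply IHk.
Qed.

Lemma prim_opp psi r : Cn 0 psi -> prim psi (- r) = - RInt (fun y => psi (- y)) 0 r.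
Proof.
  intros C. unfold prim.
  assert (E := RInt_comp_lin (V := R_CompleteNormedModule) psi (-1) 0 0 r).
  replace (-1 * 0 + 0) with 0 in E by ring. replace (-1 * r + 0) with (- r) in E by ring.
  rewrite <- E by (apply ex_RInt_of_continuous; auto).
  rewrite (RInt_ext _ (fun y => scal (-1) (psi (- y)))).
  - rewrite (RInt_scal (V := R_CompleteNormedModule)).
    + unfold scal; simpl; unfold mult; simpl. ring.
    + apply ex_RInt_of_continuous. intros x.
      apply (continuous_comp Ropp psi); auto.
      apply continuous_of_ex_derive. auto_derive. auto.
  - intros x _. replace (-1 * x + 0) with (- x) by ring. reflexivity.
Qed.

Lemma even_prim_of_odd psi : Cn 0 psi -> odd_fun psi -> even_fun (prim psi).
Proof.
  intros C O r. rewrite prim_opp; auto. unfold prim.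
  rewrite (RInt_ext _ (fun y => - psi y)), (RInt_opp (V := R_CompleteNormedModule)).
  - apply Ropp_involutive.
  - apply ex_RInt_of_continuous; auto.
  - intros; apply O.
Qed.

Lemma odd_prim_of_even psi : Cn 0 psi -> even_fun psi -> odd_fun (prim psi).
Proof.
  intros C E r. rewrite prim_opp; auto. unfold prim. f_equal. apply RInt_ext. intros; apply E.
Qed.

Lemma odd_primn_double k psi : Cn 0 psi -> odd_fun psi -> odd_fun (primn (2 * k) psi).
Proof.
  intros C O. induction k; [exact O|].
  replace (2 * S k)%nat with (S (S (2 * k))) by lia. simpl.
  apply odd_prim_of_even; [apply (primn_continuous 1) | apply even_prim_of_odd];
    try apply primn_continuous; auto.
Qed.

Lemma RInt_of_is_derive (f F : R -> R) a b :
  (forall x, is_derive F x (f x)) -> Cn 0 f -> RInt f a b = F b - F a.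
Proof.
  intros H1 H2. apply is_RInt_unique.
  apply (is_RInt_derive (V := R_CompleteNormedModule) F f); intros; auto.
Qed.

Lemma prim_abs_diff_le (psi1 psi2 g G : R -> R) s : 0 <= s -> Cn 0 psi1 -> Cn 0 psi2 ->
  (forall x, is_derive G x (g x)) -> Cn 0 g ->
  (forall t, 0 <= t <= s -> Rabs (psi1 t - psi2 t) <= g t) ->
  Rabs (prim psi1 s - prim psi2 s) <= G s - G 0.
Proof.
  intros Hs H1 H2 HG Hg Hb.
  assert (Cd : Cn 0 (fun x => psi1 x - psi2 x)) by (apply Cn_minus; auto).
  unfold prim. rewrite <- (RInt_minus (V := R_CompleteNormedModule))
    by (apply ex_RInt_of_continuous; auto).
  eapply Rle_trans; [apply abs_RInt_le; auto; apply ex_RInt_of_continuous; auto|].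
  rewrite <- (RInt_of_is_derive g G 0 s); auto.
  apply RInt_le; auto; try (apply ex_RInt_of_continuous; auto).
  - intros x. apply continuous_Rabs_comp. apply Cd.
  - intros; apply Hb; lra.
Qed.

Lemma primn_abs_diff_le k psi1 psi2 B r : 0 <= r -> Cn 0 psi1 -> Cn 0 psi2 ->
  (forall t, 0 <= t <= r -> Rabs (psi1 t - psi2 t) <= B) ->
  Rabs (primn k psi1 r - primn k psi2 r) <= B * r ^ k / INR (fact k).
Proof.
  intros Hr C1 C2 Hb.
  enough (H : forall s, 0 <= s <= r ->
    Rabs (primn k psi1 s - primn k psi2 s) <= B * s ^ k / INR (fact k)) by (apply H; lra).
  induction k; intros s Hs.
  - simpl. replace (B * 1 / 1) with B by field. apply Hb; auto.
  - assert (Hf : INR (fact (S k)) = INR (S k) * INR (fact k)) by (rewrite fact_simpl, mult_INR; auto).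
    assert (Hk : 0 < INR (fact k)) by apply INR_fact_lt_0.
    assert (Hk' : 0 < INR (S k)) by apply lt_0_INR, Nat.lt_0_succ.
    eapply Rle_trans.
    + apply (prim_abs_diff_le _ _ (fun t => B * t ^ k / INR (fact k))
               (fun t => B * t ^ S k / INR (fact (S k)))); try apply primn_continuous; auto; try lra.
      * intros x. auto_derive; auto.
        change (match k with 0%nat => 1 | S _ => INR k + 1 end) with (INR (S k)).
        change (fact k + k * fact k)%nat with (fact (S k)). rewrite Hf. field. lra.
      * apply Cn_mult; [apply Cn_scal, Cn_pow | apply Cn_const].
      * intros t Ht. apply IHk. lra.
    + simpl. lra.
Qed.

(** * Difference quotients and the radial Laplacian *)

Definition wmean (j : nat) (g : R -> R) (r : R) : R := RInt (fun s => s ^ j * g (r * s)) 0 1.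

Lemma is_derive_wmean j g : (forall x, ex_derive g x) -> Cn 0 (Derive g) ->
  forall r, is_derive (wmean j g) r (wmean (S j) (Derive g) r).
Proof.
  intros Hg Hc r. unfold wmean.
  assert (Hint : forall t x, is_derive (fun y => t ^ j * g (y * t)) x (t ^ S j * Derive g (x * t))).
  { intros t x. auto_derive; auto.
    replace (Derive (fun x => g x) (x * t)) with (Derive g (x * t)) by reflexivity. simpl; ring. }
  rewrite (RInt_ext _ (fun t => Derive (fun y => t ^ j * g (y * t)) r)).
  2: { intros t _. symmetry. apply is_derive_unique, Hint. }
  apply (is_derive_RInt_param (fun y t => t ^ j * g (y * t)) 0 1 r).
  - apply filter_forall. intros y t _. eexists; apply Hint.
  - intros t _.
    apply (continuity_2d_pt_ext (fun y s => s ^ S j * Derive g (y * s))).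
    { intros y s; symmetry; apply is_derive_unique, Hint. }
    apply continuity_2d_pt_mult.
    + apply (continuity_1d_2d_pt_comp (fun s => s ^ S j) (fun _ s => s)).
      * apply derivable_continuous_pt, derivable_pt_pow.
      * apply continuity_2d_pt_id2.
    + apply (continuity_1d_2d_pt_comp (Derive g) (fun y s => y * s)).
      * apply continuity_pt_of_continuous, Hc.
      * apply continuity_2d_pt_mult; [apply continuity_2d_pt_id1 | apply continuity_2d_pt_id2].
  - apply filter_forall. intros y. apply ex_RInt_of_continuous. intros z.
    apply continuous_of_ex_derive. auto_derive. auto.
Qed.

Lemma wmean_0 j g : wmean j g 0 = g 0 / INR (S j).
Proof.
  unfold wmean.
  rewrite (RInt_ext _ (fun s => g 0 * s ^ j)).
  2: { intros x _. rewrite Rmult_0_l. apply Rmult_comm. }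
  rewrite (RInt_of_is_derive _ (fun s => g 0 * s ^ S j / INR (S j))).
  - rewrite pow1, pow_i by lia. field. apply not_0_INR; lia.
  - intros x. auto_derive; auto.
    change (match j with 0%nat => 1 | S _ => INR j + 1 end) with (INR (S j)).
    field. apply not_0_INR; lia.
  - apply Cn_scal, Cn_pow.
Qed.

Lemma Cn_wmean n : forall j g, Cn (S n) g -> Cn n (wmean j g).
Proof.
  induction n; intros j g [H1 H2].
  - intros x. apply continuous_of_ex_derive. eexists; apply is_derive_wmean; auto.
  - assert (Hc := Cn_continuous _ _ H2). split.
    + intros x; eexists; apply is_derive_wmean; auto.
    + apply (Cn_ext n (wmean (S j) (Derive g))).
      * intros; symmetry; apply is_derive_unique, is_derive_wmean; auto.
      * apply IHn; auto.
Qed.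

Lemma wmean1_le g h r : 0 <= r -> Cn 0 g -> Cn 0 h ->
  (forall t, 0 <= t <= r -> h t <= g t) -> wmean 1 h r <= wmean 1 g r.
Proof.
  intros Hr Hg Hh Hle.
  assert (Ci : forall f, Cn 0 f -> ex_RInt (fun s => s ^ 1 * f (r * s)) 0 1).
  { intros f Hf. apply ex_RInt_of_continuous. intros z.
    apply (continuous_mult (fun s => s ^ 1) (fun s => f (r * s))).
    - apply continuous_of_ex_derive; auto_derive; auto.
    - apply (continuous_comp (fun s => r * s) f); auto.
      apply continuous_of_ex_derive; auto_derive; auto. }
  unfold wmean. apply RInt_le; [lra | auto | auto |].
  intros x Hx. apply Rmult_le_compat_l; [simpl; lra|]. apply Hle. split.
  - apply Rmult_le_pos; lra.
  - rewrite <- (Rmult_1_r r) at 2. apply Rmult_le_compat_l; lra.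
Qed.

Lemma wmean1_cubic b c r : wmean 1 (fun t => b * t + c * t ^ 3) r = b * r / 3 + c * r ^ 3 / 5.
Proof.
  unfold wmean. rewrite (RInt_of_is_derive _ (fun s => b * r * s ^ 3 / 3 + c * r ^ 3 * s ^ 5 / 5)).
  - simpl; field.
  - intros x. auto_derive; auto. simpl; field.
  - intros x. apply continuous_of_ex_derive. auto_derive. auto.
Qed.

(* [divq W r] is [(W r - W 0) / r] (see [mul_divq]), written as the mean of
   [Derive W] over the segment from [0] to [r], which is smooth through [r = 0]. *)
Definition divq (W : R -> R) : R -> R := wmean 0 (Derive W).

Lemma Cn_divq n W : Cn (S (S n)) W -> Cn n (divq W).
Proof. intros [_ H]. exact (Cn_wmean n 0 (Derive W) H). Qed.

Lemma smooth_divq W : smooth W -> smooth (divq W).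
Proof. intros H. apply smooth_of_Cn. intros n. apply Cn_divq, Cn_of_smooth; auto. Qed.

Lemma divq_0 W : divq W 0 = Derive W 0.
Proof. unfold divq. rewrite wmean_0. simpl. field. Qed.

Lemma mul_divq W r : Cn 1 W -> r * divq W r = W r - W 0.
Proof.
  intros [H1 H2]. unfold divq, wmean.
  rewrite (RInt_ext _ (fun s => Derive W (r * s + 0))).
  2: { intros; rewrite Rplus_0_r; simpl; ring. }
  assert (E := RInt_comp_lin (V := R_CompleteNormedModule) (Derive W) r 0 0 1).
  rewrite Rmult_0_r, Rmult_1_r, Rplus_0_r, Rplus_0_r in E.
  change (scal r (RInt (fun s => Derive W (r * s + 0)) 0 1) = W r - W 0).
  rewrite <- (RInt_scal (V := R_CompleteNormedModule)).
  - rewrite E by (apply ex_RInt_of_continuous; auto). apply RInt_Derive; auto.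
  - apply ex_RInt_of_continuous. intros z.
    apply (continuous_comp (fun s => r * s + 0) (Derive W)); auto.
    apply continuous_of_ex_derive; auto_derive; auto.
Qed.

Lemma mul_divq_odd W r : Cn 1 W -> odd_fun W -> r * divq W r = W r.
Proof. intros H1 Ho. rewrite mul_divq, (odd_fun_0 W Ho) by auto. ring. Qed.

Definition mul_id (f : R -> R) (r : R) : R := r * f r.

Lemma Cn_mul_id n f : Cn n f -> Cn n (mul_id f).
Proof. intros H. apply Cn_mult; [apply Cn_id | auto]. Qed.

Lemma smooth_mul_id f : smooth f -> smooth (mul_id f).
Proof. intros H. apply smooth_of_Cn. intros n. apply Cn_mul_id, Cn_of_smooth; auto. Qed.

Lemma divq_mul_id f : smooth f -> forall x, divq (mul_id f) x = f x.
Proof.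
  intros Hs x. destruct (Req_EM_T x 0) as [->|Hx].
  - rewrite divq_0. apply is_derive_unique. unfold mul_id.
    auto_derive; [apply smooth_ex_derive; auto | ring].
  - apply Rmult_eq_reg_l with x; auto. rewrite mul_divq; [unfold mul_id; ring|].
    apply Cn_mul_id, Cn_of_smooth; auto.
Qed.

Definition D2 (W : R -> R) : R -> R := Derive (Derive W).

Lemma smooth_D2 W : smooth W -> smooth (D2 W).
Proof. intros; apply smooth_Derive, smooth_Derive; auto. Qed.

Lemma even_Derive_of_odd (f : R -> R) : (forall x, ex_derive f x) -> odd_fun f -> even_fun (Derive f).
Proof.
  intros Hd Ho r.
  rewrite (Derive_ext f (fun y => - f (- y))) by (intros y; rewrite Ho; ring).
  apply is_derive_unique. auto_derive; auto.
  change (fun x => f x) with f. rewrite Ropp_involutive. ring.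
Qed.

Lemma odd_Derive_of_even (f : R -> R) : (forall x, ex_derive f x) -> even_fun f -> odd_fun (Derive f).
Proof.
  intros Hd He r.
  rewrite (Derive_ext f (fun y => f (- y))) by (intros y; rewrite He; auto).
  apply is_derive_unique. auto_derive; auto.
  change (fun x => f x) with f. rewrite Ropp_involutive. ring.
Qed.

Lemma odd_D2 W : smooth W -> odd_fun W -> odd_fun (D2 W).
Proof.
  intros Hs Ho. apply odd_Derive_of_even; [apply smooth_ex_derive, smooth_Derive; auto|].
  apply even_Derive_of_odd; auto. apply smooth_ex_derive; auto.
Qed.

Lemma even_divq W : smooth W -> odd_fun W -> even_fun (divq W).
Proof.
  intros Hs Ho r. assert (E := even_Derive_of_odd W (smooth_ex_derive W Hs) Ho).
  unfold divq, wmean. apply RInt_ext. intros x _.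
  replace (- r * x) with (- (r * x)) by ring. rewrite E; auto.
Qed.

Lemma odd_mul_id f : even_fun f -> odd_fun (mul_id f).
Proof. intros H r. unfold mul_id. rewrite H. ring. Qed.

Lemma divq_ext f g r : (forall x, f x = g x) -> divq f r = divq g r.
Proof.
  intros H. unfold divq, wmean. apply RInt_ext. intros x _. f_equal. apply Derive_ext; auto.
Qed.

Lemma radLap_ext f g r : (forall x, f x = g x) -> radLap f r = radLap g r.
Proof.
  intros H. unfold radLap. rewrite !(Derive_n_ext f g), (Derive_ext f g); auto.
Qed.

Lemma Derive_n_mul_id f : smooth f -> forall k x,
  Derive_n (mul_id f) (S k) x = INR (S k) * Derive_n f k x + x * Derive_n f (S k) x.
Proof.
  intros Hs. induction k; intros x.
  - apply is_derive_unique. unfold mul_id. auto_derive; [apply smooth_ex_derive; auto|]. simpl. ring.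
  - change (Derive_n (mul_id f) (S (S k)) x) with (Derive (Derive_n (mul_id f) (S k)) x).
    rewrite (Derive_ext _ _ _ IHk).
    apply is_derive_unique. auto_derive; [repeat split; first [apply (Hs (S k)) | apply (Hs (S (S k)))]|].
    change (match k with 0%nat => 1 | S _ => INR k + 1 end) with (INR (S k)).
    change (fun y => Derive_n f k y) with (Derive_n f k).
    change (fun y => Derive (Derive_n f k) y) with (Derive (Derive_n f k)).
    change (Derive_n f (S (S k)) x) with (Derive (Derive (Derive_n f k)) x).
    change (Derive_n f (S k) x) with (Derive (Derive_n f k) x).
    rewrite (S_INR (S k)). ring.
Qed.

Lemma radLap_eq_divq f : smooth f -> Derive f 0 = 0 ->
  forall r, radLap f r = divq (D2 (mul_id f)) r.
Proof.
  intros Hs Hf0 r.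
  assert (G2 : forall x, D2 (mul_id f) x = 2 * Derive f x + x * Derive_n f 2 x).
  { intros x. apply (Derive_n_mul_id f Hs 1). }
  unfold radLap. destruct (Req_EM_T r 0) as [->|Hr].
  - rewrite divq_0. change (Derive (D2 (mul_id f)) 0) with (Derive_n (mul_id f) 3 0).
    rewrite Derive_n_mul_id by auto. simpl. ring.
  - apply Rmult_eq_reg_l with r; auto.
    rewrite mul_divq by (apply Cn_of_smooth, smooth_D2, smooth_mul_id; auto).
    rewrite !G2, Hf0. field. auto.
Qed.

Lemma radLap_divq W : smooth W -> odd_fun W -> forall r, radLap (divq W) r = divq (D2 W) r.
Proof.
  intros Hs Ho r.
  assert (Sv : smooth (divq W)) by (apply smooth_divq; auto).
  assert (Dv0 : Derive (divq W) 0 = 0).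
  { apply odd_fun_0, odd_Derive_of_even; [apply smooth_ex_derive | apply even_divq]; auto. }
  rewrite radLap_eq_divq by auto. apply divq_ext. intros x.
  apply Derive_ext. intros y. apply Derive_ext. intros z. unfold mul_id.
  rewrite mul_divq, (odd_fun_0 W) by (auto; apply Cn_of_smooth; auto). ring.
Qed.

Lemma radLap_iter_ext k f g : (forall x, f x = g x) ->
  forall r, Nat.iter k radLap f r = Nat.iter k radLap g r.
Proof.
  intros H. induction k; intros r; simpl; auto. apply radLap_ext; auto.
Qed.

Lemma radLap_iter_divq k : forall W, smooth W -> odd_fun W ->
  forall r, Nat.iter k radLap (divq W) r = divq (Nat.iter k D2 W) r.
Proof.
  induction k; intros W Hs Ho r; [reflexivity|].
  rewrite !Nat.iter_succ_r.
  rewrite (radLap_iter_ext k _ (divq (D2 W))) by (apply radLap_divq; auto).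
  apply IHk; [apply smooth_D2 | apply odd_D2]; auto.
Qed.

Lemma smooth_iter_D2 k W : smooth W -> smooth (Nat.iter k D2 W).
Proof. intros H. induction k; simpl; auto. apply smooth_D2; auto. Qed.

Lemma odd_iter_D2 k W : smooth W -> odd_fun W -> odd_fun (Nat.iter k D2 W).
Proof.
  intros Hs Ho. induction k; simpl; auto. apply odd_D2; auto. apply smooth_iter_D2; auto.
Qed.

Lemma iter_D2_Derive_n k W x : Nat.iter k D2 W x = Derive_n W (2 * k) x.
Proof.
  revert x. induction k; intros x; [reflexivity|].
  replace (2 * S k)%nat with (S (S (2 * k))) by lia.
  apply Derive_ext. intros y. apply Derive_ext. intros z. apply IHk.
Qed.

Lemma divq_iter_D2_0 k W : divq (Nat.iter k D2 W) 0 = Derive_n W (S (2 * k)) 0.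
Proof. rewrite divq_0. apply Derive_ext, iter_D2_Derive_n. Qed.

Lemma solution_radLap_iter k u : pos_entire_radial_solution u ->
  forall r, Nat.iter k radLap u r = divq (Nat.iter k D2 (mul_id u)) r.
Proof.
  intros [He [Hs _]] r.
  rewrite <- radLap_iter_divq by (apply smooth_mul_id || apply odd_mul_id; auto).
  apply radLap_iter_ext. intros; symmetry; apply divq_mul_id; auto.
Qed.

Lemma iter_D2_mul_id_of_solution u : pos_entire_radial_solution u ->
  forall r, Nat.iter 3 D2 (mul_id u) r = - r / u r ^ 3.
Proof.
  intros Hu. pose proof Hu as [He [Hs [Hp Heq]]].
  assert (S0 : smooth (mul_id u)) by (apply smooth_mul_id; auto).
  assert (O0 : odd_fun (mul_id u)) by (apply odd_mul_id; auto).
  set (W6 := Nat.iter 3 D2 (mul_id u)).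
  assert (S6 : smooth W6) by (apply smooth_iter_D2; auto).
  assert (O6 : odd_fun W6) by (apply odd_iter_D2; auto).
  assert (Hpos : forall r, 0 < r -> W6 r = - r / u r ^ 3).
  { intros r Hr. assert (H := Heq r (Rlt_le _ _ Hr)).
    change (Nat.iter 3 radLap u r = - / u r ^ 3) in H.
    rewrite (solution_radLap_iter 3 u Hu) in H.
    assert (M := mul_divq W6 r (Cn_of_smooth 1 W6 S6)).
    fold W6 in H. rewrite (odd_fun_0 W6 O6), H in M. unfold Rdiv. lra. }
  intros r. destruct (Rtotal_order r 0) as [Hr|[->|Hr]].
  - rewrite <- (Ropp_involutive r) at 1. rewrite O6, Hpos, He by lra. field.
    specialize (Hp r). lra.
  - rewrite (odd_fun_0 W6 O6). unfold Rdiv. ring.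
  - apply Hpos; auto.
Qed.

Lemma solution_of_iter_D2_divq W : smooth W -> odd_fun W -> (forall r, 0 < divq W r) ->
  (forall r, Nat.iter 3 D2 W r = - r / divq W r ^ 3) ->
  pos_entire_radial_solution (divq W).
Proof.
  intros Hs Ho Hp H6.
  split; [apply even_divq; auto | split; [apply smooth_divq; auto | split; auto]].
  intros r _. change (Nat.iter 3 radLap (divq W) r = - / divq W r ^ 3).
  rewrite radLap_iter_divq by auto.
  assert (Hnz : forall x, divq W x ^ 3 <> 0) by (intros; apply pow_nonzero, Rgt_not_eq, Hp).
  destruct (Req_EM_T r 0) as [->|Hr].
  - rewrite divq_0, (Derive_ext _ _ _ H6). apply is_derive_unique.
    assert (dV : ex_derive (divq W) 0) by (apply smooth_ex_derive, smooth_divq; auto).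
    assert (V0 := Hp 0).
    auto_derive; [repeat split; auto; apply Rgt_not_eq; repeat apply Rmult_lt_0_compat; lra|].
    field. lra.
  - apply (Rmult_eq_reg_l r); auto.
    rewrite mul_divq by (apply Cn_of_smooth, smooth_iter_D2; auto).
    rewrite !H6. field. split; apply Rgt_not_eq, Hp.
Qed.

(** * Growth of solutions *)

Lemma le_of_is_derive_nonneg (F dF : R -> R) a b : a <= b ->
  (forall x, is_derive F x (dF x)) -> (forall x, a <= x <= b -> 0 <= dF x) -> F a <= F b.
Proof.
  intros Hab Hd Hp.
  destruct (MVT_gen F a b dF) as [c [Hc E]].
  - intros; auto.
  - intros; apply continuity_pt_of_continuous, continuous_of_ex_derive; eexists; eauto.
  - rewrite Rmin_left, Rmax_right in Hc by lra.
    assert (0 <= dF c * (b - a)) by (apply Rmult_le_pos; auto; lra). lra.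
Qed.

Lemma is_derive_divq W : smooth W -> forall r, is_derive (divq W) r (wmean 1 (D2 W) r).
Proof.
  intros Hs r. exact (is_derive_wmean 0 (Derive W)
    (smooth_ex_derive _ (smooth_Derive W Hs)) (smooth_continuous _ (smooth_D2 W Hs)) r).
Qed.

Lemma divq_nonincreasing W x y : smooth W -> (forall t, 0 <= t -> D2 W t <= 0) ->
  0 <= x <= y -> divq W y <= divq W x.
Proof.
  intros Hs Hneg Hxy.
  enough (- divq W x <= - divq W y) by lra.
  apply (le_of_is_derive_nonneg (fun z => - divq W z) (fun z => - wmean 1 (D2 W) z)); [lra | |].
  - intros z. apply (is_derive_opp (K := R_AbsRing) (V := R_NormedModule)), is_derive_divq; auto.
  - intros z Hz. enough (wmean 1 (D2 W) z <= 0) by lra.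
    assert (E := wmean1_cubic 0 0 z).
    replace (0 * z / 3 + 0 * z ^ 3 / 5) with 0 in E by field. rewrite <- E.
    apply wmean1_le; [lra | | apply Cn_of_smooth, smooth_D2; auto |].
    + apply Cn_plus; apply Cn_scal; [apply Cn_id | apply Cn_pow].
    + intros t Ht. specialize (Hneg t ltac:(lra)). lra.
Qed.

Lemma divq_ge_quartic W b c r : smooth W ->
  (forall t, 0 <= t -> b * t + c * t ^ 3 <= D2 W t) -> 0 <= r ->
  divq W 0 + b * r ^ 2 / 6 + c * r ^ 4 / 20 <= divq W r.
Proof.
  intros Hs Hge Hr.
  enough (divq W 0 - (b * 0 ^ 2 / 6 + c * 0 ^ 4 / 20) <= divq W r - (b * r ^ 2 / 6 + c * r ^ 4 / 20))
    by (replace (b * 0 ^ 2 / 6 + c * 0 ^ 4 / 20) with 0 in * by field; lra).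
  apply (le_of_is_derive_nonneg (fun z => divq W z - (b * z ^ 2 / 6 + c * z ^ 4 / 20))
           (fun z => wmean 1 (D2 W) z - (b * z / 3 + c * z ^ 3 / 5))); [lra | |].
  - intros z. apply (is_derive_minus (K := R_AbsRing) (V := R_NormedModule));
      [apply is_derive_divq; auto|].
    auto_derive; auto. field.
  - intros z Hz. rewrite <- (wmean1_cubic b c z).
    enough (wmean 1 (fun t => b * t + c * t ^ 3) z <= wmean 1 (D2 W) z) by lra.
    apply (wmean1_le (D2 W) (fun t => b * t + c * t ^ 3) z);
      [lra | apply Cn_of_smooth, smooth_D2; auto | |].
    + apply Cn_plus; apply Cn_scal; [apply Cn_id | apply Cn_pow].
    + intros t Ht. apply Hge. lra.
Qed.

Lemma quartic_minorant (u : R -> R) a b l : 0 <= a -> 0 < l -> Cn 0 u ->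
  (forall r, 0 < u r) -> (forall r, 0 <= r -> a + b * r ^ 2 / 6 + l * r ^ 4 / 120 <= u r) ->
  exists m, 0 < m /\ forall r, 0 <= r -> m * (1 + r) ^ 4 <= u r.
Proof.
  intros Ha Hl Cu Hp Hge.
  (* Beyond [R0] the quartic term dominates: [b r^2 / 6 >= - l r^4 / 240] and
     [(1 + r)^4 <= 16 r^4], so [u r >= l r^4 / 240 >= l (1 + r)^4 / 3840]. *)
  set (R0 := 1 + 40 * Rabs b / l).
  assert (R0ge : 1 <= R0).
  { assert (0 <= 40 * Rabs b / l) by (apply Rmult_le_pos; [pose proof (Rabs_pos b); lra | apply Rlt_le, Rinv_0_lt_compat; auto]).
    unfold R0; lra. }
  destruct (continuity_ab_min u 0 R0) as [xm Hxm]; [lra | intros; apply continuity_pt_of_continuous, Cu |].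
  assert (mupos := Hp xm).
  exists (Rmin (l / 3840) (u xm / (1 + R0) ^ 4)). split.
  { apply Rmin_case; [lra|]. apply Rdiv_lt_0_compat; auto. apply pow_lt; lra. }
  intros r Hr. destruct (Rle_or_lt r R0) as [HrR|HrR].
  - apply Rle_trans with (u xm / (1 + R0) ^ 4 * (1 + r) ^ 4).
    { apply Rmult_le_compat_r; [apply pow_le; lra | apply Rmin_r]. }
    apply Rle_trans with (u xm); [|apply Hxm; lra].
    assert ((1 + r) ^ 4 <= (1 + R0) ^ 4) by (apply pow_incr; lra).
    assert (0 < (1 + R0) ^ 4) by (apply pow_lt; lra).
    apply (Rmult_le_reg_r ((1 + R0) ^ 4)); auto. field_simplify; [nra | lra].
  - apply Rle_trans with (l / 3840 * (1 + r) ^ 4).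
    { apply Rmult_le_compat_r; [apply pow_le; lra | apply Rmin_l]. }
    assert (H := Hge r Hr).
    assert (Hb : l * r ^ 2 >= 40 * Rabs b).
    { assert (r <= r ^ 2) by (simpl; nra).
      assert (R0 * l = l + 40 * Rabs b) by (unfold R0; field; lra). nra. }
    assert (Hb2 : - Rabs b <= b) by (pose proof (Rabs_maj2 b); lra).
    assert (r2 : 0 <= r ^ 2) by (apply pow_le; lra).
    assert (A1 : 0 <= (l * r ^ 2 - 40 * Rabs b) * r ^ 2) by (apply Rmult_le_pos; lra).
    assert (A2 : b * r ^ 2 >= - Rabs b * r ^ 2) by nra.
    assert (A : b * r ^ 2 / 6 >= - (l * r ^ 4) / 240).
    { replace (r ^ 4) with (r ^ 2 * r ^ 2) by ring. nra. }
    assert (B : (1 + r) ^ 4 <= (2 * r) ^ 4) by (apply pow_incr; lra).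
    replace ((2 * r) ^ 4) with (16 * r ^ 4) in B by ring.
    nra.
Qed.

Lemma solution_radLap2_ge u (l : R) : pos_entire_radial_solution u ->
  is_lim (radLap (radLap u)) p_infty l -> forall r, 0 <= r -> l <= radLap (radLap u) r.
Proof.
  intros Hu Hl r Hr.
  assert (E6 := iter_D2_mul_id_of_solution u Hu).
  pose proof Hu as [_ [Hs [Hp _]]].
  assert (Lap2 : forall x, radLap (radLap u) x = divq (Nat.iter 2 D2 (mul_id u)) x)
    by exact (solution_radLap_iter 2 u Hu).
  set (F := radLap (radLap u)) in *.
  assert (H := is_lim_le_loc F (fun _ => F r) p_infty l (F r)). simpl in H. apply H.
  - exists r. intros x Hx. rewrite !Lap2.
    apply divq_nonincreasing; [apply smooth_iter_D2, smooth_mul_id; auto | | lra].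
    intros t Ht. change (D2 (Nat.iter 2 D2 (mul_id u)) t) with (Nat.iter 3 D2 (mul_id u) t).
    rewrite E6. assert (0 < / u t ^ 3) by (apply Rinv_0_lt_compat, pow_lt, Hp).
    unfold Rdiv. nra.
  - exact Hl.
  - apply is_lim_const.
Qed.

Lemma solution_quartic_growth u l : pos_entire_radial_solution u ->
  (forall r, 0 <= r -> l <= radLap (radLap u) r) ->
  forall r, 0 <= r -> u 0 + radLap u 0 * r ^ 2 / 6 + l * r ^ 4 / 120 <= u r.
Proof.
  intros Hu Hl r Hr. pose proof Hu as [He [Hs _]].
  set (W := mul_id u). set (W2 := D2 W). set (W4 := D2 W2).
  assert (S0 : smooth W) by (apply smooth_mul_id; auto).
  assert (O0 : odd_fun W) by (apply odd_mul_id; auto).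
  assert (S2 : smooth W2) by (apply smooth_D2; auto).
  assert (O2 : odd_fun W2) by (apply odd_D2; auto).
  assert (S4 : smooth W4) by (apply smooth_D2; auto).
  assert (O4 : odd_fun W4) by (apply odd_D2; auto).
  assert (W4_ge : forall t, 0 <= t -> l * t + 0 * t ^ 3 <= D2 W2 t).
  { intros t Ht. change (D2 W2 t) with (W4 t).
    rewrite <- (mul_divq_odd W4 t) by (try apply Cn_of_smooth; auto).
    assert (H : l <= Nat.iter 2 radLap u t) by exact (Hl t Ht).
    rewrite (solution_radLap_iter 2 u Hu) in H. change (l <= divq W4 t) in H. nra. }
  set (b := radLap u 0).
  assert (Hb : b = divq W2 0) by exact (solution_radLap_iter 1 u Hu 0).
  assert (W2_ge : forall t, 0 <= t -> b * t + l / 6 * t ^ 3 <= D2 W t).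
  { intros t Ht. change (D2 W t) with (W2 t).
    rewrite <- (mul_divq_odd W2 t) by (try apply Cn_of_smooth; auto).
    assert (H := divq_ge_quartic W2 l 0 t S2 W4_ge Ht). rewrite <- Hb in H.
    replace (b * t + l / 6 * t ^ 3) with (t * (b + l * t ^ 2 / 6)) by field.
    apply Rmult_le_compat_l; [auto | lra]. }
  assert (H := divq_ge_quartic W b (l / 6) r S0 W2_ge Hr).
  unfold W in H. rewrite !divq_mul_id in H by auto. lra.
Qed.

Lemma solution_quartic_lower_bound u : pos_entire_radial_solution u ->
  (exists l : R, is_lim (radLap (radLap u)) p_infty l /\ 0 < l) ->
  exists m, 0 < m /\ forall r, m * (1 + Rabs r) ^ 4 <= u r.
Proof.
  intros Hu [l [Hl lpos]]. pose proof Hu as [He [Hs [Hp _]]].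
  destruct (quartic_minorant u (u 0) (radLap u 0) l) as [m [Hm Hmu]]; auto.
  - apply Rlt_le, Hp.
  - apply Cn_of_smooth; auto.
  - apply solution_quartic_growth; auto. apply solution_radLap2_ge; auto.
  - exists m. split; auto. intros r. destruct (Rle_or_lt 0 r).
    + rewrite Rabs_right by lra. auto.
    + rewrite Rabs_left, <- He by lra. apply Hmu. lra.
Qed.

(** * A weighted contraction *)

Definition exp_atan (A t : R) : R := exp (A * atan t).

Definition weight (A t : R) : R := t * (1 + t) ^ 4 * exp_atan A t.

Lemma exp_atan_le A x y : 0 <= A -> x <= y -> exp_atan A x <= exp_atan A y.
Proof.
  intros HA Hxy. unfold exp_atan. destruct (Req_dec x y) as [->|Hne]; [lra|].
  destruct (Req_dec A 0) as [->|HA0]; [rewrite !Rmult_0_l; lra|].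
  left. apply exp_increasing, Rmult_lt_compat_l; [lra|]. apply atan_increasing; lra.
Qed.

Lemma exp_atan_ge_1 A t : 0 <= A -> 0 <= t -> 1 <= exp_atan A t.
Proof.
  intros HA Ht. replace 1 with (exp_atan A 0); [apply exp_atan_le; auto|].
  unfold exp_atan. rewrite atan_0, Rmult_0_r, exp_0; auto.
Qed.

Lemma weight_nonneg A t : 0 <= t -> 0 <= weight A t.
Proof.
  intros Ht. unfold weight, exp_atan.
  apply Rmult_le_pos; [apply Rmult_le_pos; [auto | apply pow_le; lra] | left; apply exp_pos].
Qed.

Lemma weight_le A x y : 0 <= A -> 0 <= x <= y -> weight A x <= weight A y.
Proof.
  intros HA Hxy. unfold weight. apply Rmult_le_compat.
  - apply Rmult_le_pos; [lra | apply pow_le; lra].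
  - unfold exp_atan; left; apply exp_pos.
  - apply Rmult_le_compat; try lra; [apply pow_le; lra | apply pow_incr; lra].
  - apply exp_atan_le; lra.
Qed.

(* [exp_atan A] solves [y' = A / (1 + t^2) y]: one integration absorbs the
   factor [A / (1 + t^2)] of the Lipschitz bound, and the remaining five cost
   only [r^5 / 5!], which the polynomial part of the weight dominates. *)
Lemma primn6_contraction psi1 psi2 M A r : 0 <= r -> 0 <= A -> 0 <= M ->
  Cn 0 psi1 -> Cn 0 psi2 ->
  (forall t, 0 <= t <= r -> Rabs (psi1 t - psi2 t) <= M * (A / (1 + t ^ 2)) * exp_atan A t) ->
  Rabs (primn 6 psi1 r - primn 6 psi2 r) <= M / 2 * weight A r.
Proof.
  intros Hr HA HM C1 C2 Hb.
  assert (Hlam : 0 < exp_atan A r) by apply exp_pos.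
  assert (Step1 : forall s, 0 <= s <= r ->
    Rabs (prim psi1 s - prim psi2 s) <= M * exp_atan A r).
  { intros s Hs. eapply Rle_trans.
    - apply (prim_abs_diff_le psi1 psi2 (fun t => M * (A / (1 + t ^ 2)) * exp_atan A t)
               (fun t => M * exp_atan A t)); auto; [lra | | | intros; apply Hb; lra].
      + intros x. unfold exp_atan. auto_derive; [auto|]. field. nra.
      + intros x. unfold exp_atan. apply continuous_of_ex_derive. auto_derive. nra.
    - assert (0 <= M * exp_atan A 0) by (apply Rmult_le_pos; [auto | left; apply exp_pos]).
      assert (M * exp_atan A s <= M * exp_atan A r)
        by (apply Rmult_le_compat_l; [auto | apply exp_atan_le; lra]).
      lra. }
  change (primn 6 psi1 r) with (primn 5 (prim psi1) r).
  change (primn 6 psi2 r) with (primn 5 (prim psi2) r).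
  eapply Rle_trans; [apply (primn_abs_diff_le 5 _ _ (M * exp_atan A r)); auto; apply (primn_continuous 1); auto|].
  assert (r ^ 5 <= r * (1 + r) ^ 4).
  { replace (r ^ 5) with (r * r ^ 4) by ring. apply Rmult_le_compat_l; [auto | apply pow_incr; lra]. }
  assert (0 <= M * exp_atan A r) by (apply Rmult_le_pos; lra).
  unfold weight. simpl (INR (fact 5)).
  assert (0 <= M * exp_atan A r * r ^ 5) by (apply Rmult_le_pos; [auto | apply pow_le; auto]).
  assert (M * exp_atan A r * r ^ 5 <= M * exp_atan A r * (r * (1 + r) ^ 4))
    by (apply Rmult_le_compat_l; auto).
  lra.
Qed.

Lemma geometric_lt C eps : 0 <= C -> 0 < eps -> exists N : nat, C * (1 / 2) ^ N < eps.
Proof.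
  intros HC He.
  destruct (pow_lt_1_zero (1 / 2)) with (y := eps / (C + 1)) as [N HN].
  - rewrite Rabs_right; lra.
  - apply Rdiv_lt_0_compat; lra.
  - exists N. specialize (HN N (le_n N)).
    rewrite Rabs_right in HN by (apply Rle_ge, pow_le; lra).
    assert (0 < (1 / 2) ^ N) by (apply pow_lt; lra).
    assert (eps / (C + 1) * (C + 1) = eps) by (field; lra).
    nra.
Qed.

Lemma le_0_of_le_geometric x C : 0 <= C -> (forall k, x <= C * (1 / 2) ^ k) -> x <= 0.
Proof.
  intros HC H. destruct (Rle_or_lt x 0) as [|Hx]; auto.
  destruct (geometric_lt C x HC Hx) as [N HN]. specialize (H N). lra.
Qed.

Lemma odd_fun_minus f g : odd_fun f -> odd_fun g -> odd_fun (fun t => f t - g t).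
Proof. intros Hf Hg t. rewrite Hf, Hg. ring. Qed.

Lemma abs_le_of_odd_fun f g : odd_fun f ->
  (forall t, 0 <= t -> Rabs (f t) <= g t) -> forall t, Rabs (f t) <= g (Rabs t).
Proof.
  intros Ho H t. destruct (Rle_or_lt 0 t).
  - rewrite (Rabs_right t) by lra. auto.
  - rewrite (Rabs_left t) by lra. rewrite <- (Ropp_involutive t) at 1.
    rewrite Ho, Rabs_Ropp. apply H; lra.
Qed.

Section WeightedContraction.

Variables (Phi : (R -> R) -> R -> R) (L : R -> R) (A : R) (Q : R -> R).
Hypothesis A_nonneg : 0 <= A.
Hypothesis Phi_continuous : forall W, Cn 0 W -> Cn 0 (Phi W).
Hypothesis Phi_odd : forall W, Cn 0 W -> odd_fun W -> odd_fun (Phi W).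
Hypothesis Phi_lipschitz : forall W W' t, Rabs (Phi W t - Phi W' t) <= L t * Rabs (W t - W' t).
Hypothesis L_weight : forall t, 0 <= t -> 0 <= L t /\ L t * (t * (1 + t) ^ 4) <= A / (1 + t ^ 2).
Hypothesis Q_continuous : Cn 0 Q.
Hypothesis Q_odd : odd_fun Q.

Definition fp_map (W : R -> R) (r : R) : R := Q r + primn 6 (Phi W) r.

Lemma fp_map_continuous W : Cn 0 W -> Cn 0 (fp_map W).
Proof. intros CW. apply Cn_plus; auto. apply primn_continuous; auto. Qed.

Lemma fp_map_odd W : Cn 0 W -> odd_fun W -> odd_fun (fp_map W).
Proof.
  intros CW OW r.
  assert (O6 : odd_fun (primn 6 (Phi W))) by exact (odd_primn_double 3 (Phi W) (Phi_continuous W CW) (Phi_odd W CW OW)).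
  unfold fp_map. rewrite Q_odd, O6. ring.
Qed.

Lemma fp_map_contraction M W W' : 0 <= M -> Cn 0 W -> Cn 0 W' ->
  (forall t, 0 <= t -> Rabs (W t - W' t) <= M * weight A t) ->
  forall r, 0 <= r -> Rabs (fp_map W r - fp_map W' r) <= M / 2 * weight A r.
Proof.
  intros HM CW CW' Hb r Hr. unfold fp_map.
  replace (Q r + primn 6 (Phi W) r - (Q r + primn 6 (Phi W') r))
    with (primn 6 (Phi W) r - primn 6 (Phi W') r) by ring.
  apply primn6_contraction; auto. intros t Ht.
  destruct (L_weight t) as [L0 L1]; [lra|].
  eapply Rle_trans; [apply Phi_lipschitz|].
  eapply Rle_trans; [apply Rmult_le_compat_l; [auto | apply Hb; lra]|].
  unfold weight.
  replace (L t * (M * (t * (1 + t) ^ 4 * exp_atan A t)))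
    with (M * (L t * (t * (1 + t) ^ 4)) * exp_atan A t) by ring.
  apply Rmult_le_compat_r; [unfold exp_atan; left; apply exp_pos|].
  apply Rmult_le_compat_l; auto.
Qed.

Variables (W0 : R -> R) (M0 : R).
Hypothesis M0_nonneg : 0 <= M0.
Hypothesis W0_continuous : Cn 0 W0.
Hypothesis W0_odd : odd_fun W0.
Hypothesis W0_step : forall t, 0 <= t -> Rabs (fp_map W0 t - W0 t) <= M0 * weight A t.

Let iterate (k : nat) : R -> R := Nat.iter k fp_map W0.

Lemma iterate_continuous_odd k : Cn 0 (iterate k) /\ odd_fun (iterate k).
Proof.
  induction k as [|k [IHc IHo]]; [exact (conj W0_continuous W0_odd)|].
  change (iterate (S k)) with (fp_map (iterate k)).
  split; [apply fp_map_continuous | apply fp_map_odd]; auto.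
Qed.

Lemma iterate_step k t : 0 <= t ->
  Rabs (iterate (S k) t - iterate k t) <= M0 * (1 / 2) ^ k * weight A t.
Proof.
  revert t. induction k; intros t Ht.
  - rewrite pow_O, Rmult_1_r. apply W0_step; auto.
  - replace (M0 * (1 / 2) ^ S k) with (M0 * (1 / 2) ^ k / 2) by (simpl; field).
    change (Rabs (fp_map (iterate (S k)) t - fp_map (iterate k) t)
              <= M0 * (1 / 2) ^ k / 2 * weight A t).
    apply fp_map_contraction; try apply iterate_continuous_odd; auto.
    apply Rmult_le_pos; [auto | apply pow_le; lra].
Qed.

Lemma iterate_tail_pos n k t : 0 <= t ->
  Rabs (iterate (k + n) t - iterate k t) <= 2 * M0 * ((1 / 2) ^ k - (1 / 2) ^ (k + n)) * weight A t.
Proof.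
  intros Ht. induction n.
  - rewrite Nat.add_0_r, Rminus_diag, Rabs_R0, Rminus_diag, Rmult_0_r, Rmult_0_l. lra.
  - replace (k + S n)%nat with (S (k + n)) by lia.
    assert (H1 := iterate_step (k + n) t Ht).
    assert (H3 := Rabs_triang (iterate (S (k + n)) t - iterate (k + n) t)
                              (iterate (k + n) t - iterate k t)).
    replace (iterate (S (k + n)) t - iterate (k + n) t + (iterate (k + n) t - iterate k t))
      with (iterate (S (k + n)) t - iterate k t) in H3 by ring.
    replace ((1 / 2) ^ S (k + n)) with ((1 / 2) ^ (k + n) / 2) by (simpl; field).
    lra.
Qed.

Lemma iterate_tail n k t :
  Rabs (iterate (k + n) t - iterate k t) <= 2 * M0 * (1 / 2) ^ k * weight A (Rabs t).
Proof.
  apply (abs_le_of_odd_fun (fun s => iterate (k + n) s - iterate k s)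
           (fun s => 2 * M0 * (1 / 2) ^ k * weight A s)).
  - apply odd_fun_minus; apply iterate_continuous_odd.
  - intros s Hs. eapply Rle_trans; [apply iterate_tail_pos; auto|].
    assert (0 <= (1 / 2) ^ (k + n)) by (apply pow_le; lra).
    assert (0 <= M0 * (1 / 2) ^ (k + n) * weight A s)
      by (apply Rmult_le_pos; [apply Rmult_le_pos | apply weight_nonneg]; auto).
    nra.
Qed.

Let fp_limit (t : R) : R := real (Lim_seq (fun k => iterate k t)).

Lemma is_lim_seq_iterate t : is_lim_seq (fun k => iterate k t) (fp_limit t).
Proof.
  apply Lim_seq_correct', ex_lim_seq_cauchy_corr. intros eps.
  assert (Hw := weight_nonneg A (Rabs t) (Rabs_pos t)).
  destruct (geometric_lt (2 * M0 * weight A (Rabs t)) (eps / 2)) as [N HN].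
  { apply Rmult_le_pos; lra. }
  { destruct eps; simpl; lra. }
  exists N. intros n m Hn Hm.
  assert (A1 := iterate_tail (n - N) N t). assert (A2 := iterate_tail (m - N) N t).
  replace (N + (n - N))%nat with n in A1 by lia.
  replace (N + (m - N))%nat with m in A2 by lia.
  rewrite Rabs_minus_sym in A2.
  assert (A3 := Rabs_triang (iterate n t - iterate N t) (iterate N t - iterate m t)).
  replace (iterate n t - iterate N t + (iterate N t - iterate m t))
    with (iterate n t - iterate m t) in A3 by ring.
  lra.
Qed.

Lemma fp_limit_approx k t :
  Rabs (fp_limit t - iterate k t) <= 2 * M0 * (1 / 2) ^ k * weight A (Rabs t).
Proof.
  assert (H := is_lim_seq_le_loc (fun n => Rabs (iterate n t - iterate k t))
    (fun _ => 2 * M0 * (1 / 2) ^ k * weight A (Rabs t))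
    (Rabs (fp_limit t - iterate k t)) (2 * M0 * (1 / 2) ^ k * weight A (Rabs t))).
  simpl in H. apply H.
  - exists k. intros n Hn. replace n with (k + (n - k))%nat by lia. apply iterate_tail.
  - apply (is_lim_seq_abs _ (fp_limit t - iterate k t)).
    apply is_lim_seq_minus'; [apply is_lim_seq_iterate | apply is_lim_seq_const].
  - apply is_lim_seq_const.
Qed.

Lemma fp_limit_odd : odd_fun fp_limit.
Proof.
  intros t.
  assert (H : is_lim_seq (fun k => iterate k (- t)) (- fp_limit t)).
  { apply (is_lim_seq_ext (fun k => - iterate k t)).
    - intros k. symmetry. apply iterate_continuous_odd.
    - apply (is_lim_seq_opp (fun k => iterate k t) (fp_limit t)), is_lim_seq_iterate. }
  unfold fp_limit at 1. rewrite (is_lim_seq_unique _ _ H). reflexivity.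
Qed.

Lemma fp_limit_continuous : Cn 0 fp_limit.
Proof.
  intros x. apply continuity_pt_filterlim, continuity_pt_locally. intros eps.
  set (C := 2 * M0 * weight A (Rabs x + 1)).
  assert (HC : 0 <= C)
    by (apply Rmult_le_pos; [lra | apply weight_nonneg; pose proof (Rabs_pos x); lra]).
  destruct (geometric_lt C (eps / 3)) as [k Hk]; [auto | destruct eps; simpl; lra|].
  assert (Ck := continuity_pt_of_continuous _ _ (proj1 (iterate_continuous_odd k) x)).
  destruct (proj1 (continuity_pt_locally _ _) Ck (mkposreal (eps / 3) ltac:(destruct eps; simpl; lra)))
    as [d Hd].
  exists (mkposreal (Rmin d 1) ltac:(apply Rmin_pos; [apply cond_pos | lra])).
  intros y Hy. change (Rabs (y - x) < Rmin d 1) in Hy.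
  assert (Hy1 : Rabs (y - x) < d) by (eapply Rlt_le_trans; [exact Hy | apply Rmin_l]).
  assert (Hy2 : Rabs (y - x) < 1) by (eapply Rlt_le_trans; [exact Hy | apply Rmin_r]).
  specialize (Hd y Hy1). change (Rabs (iterate k y - iterate k x) < eps / 3) in Hd.
  assert (Happrox : forall z, Rabs z <= Rabs x + 1 -> Rabs (fp_limit z - iterate k z) <= C * (1 / 2) ^ k).
  { intros z Hz. eapply Rle_trans; [apply fp_limit_approx|]. unfold C.
    replace (2 * M0 * weight A (Rabs x + 1) * (1 / 2) ^ k)
      with (2 * M0 * (1 / 2) ^ k * weight A (Rabs x + 1)) by ring.
    apply Rmult_le_compat_l; [apply Rmult_le_pos; [lra | apply pow_le; lra]|].
    apply weight_le; [auto | split; [apply Rabs_pos | auto]]. }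
  assert (B1 := Happrox y ltac:(pose proof (Rabs_triang_inv y x); lra)).
  assert (B2 := Happrox x ltac:(lra)). rewrite Rabs_minus_sym in B2.
  assert (T1 := Rabs_triang (fp_limit y - iterate k y) (iterate k y - iterate k x)).
  assert (T2 := Rabs_triang (fp_limit y - iterate k y + (iterate k y - iterate k x))
                            (iterate k x - fp_limit x)).
  replace (fp_limit y - iterate k y + (iterate k y - iterate k x) + (iterate k x - fp_limit x))
    with (fp_limit y - fp_limit x) in T2 by ring.
  lra.
Qed.

Lemma fp_limit_fixed r : fp_limit r = fp_map fp_limit r.
Proof.
  enough (Hpos : forall r, 0 <= r -> fp_limit r = fp_map fp_limit r).
  { destruct (Rle_or_lt 0 r); auto.
    assert (Hn := Hpos (- r) ltac:(lra)).
    rewrite <- (Ropp_involutive r), fp_limit_odd,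
      (fp_map_odd fp_limit fp_limit_continuous fp_limit_odd), Hn.
    reflexivity. }
  clear r. intros r Hr.
  assert (Hw := weight_nonneg A r Hr).
  enough (Rabs (fp_map fp_limit r - fp_limit r) <= 0)
    by (pose proof (Rabs_pos (fp_map fp_limit r - fp_limit r));
        apply Rminus_diag_uniq_sym, Rabs_eq_0; lra).
  apply (le_0_of_le_geometric _ (2 * M0 * weight A r)); [apply Rmult_le_pos; lra|]. intros k.
  assert (S1 : Rabs (fp_map fp_limit r - fp_map (iterate k) r)
               <= 2 * M0 * (1 / 2) ^ k / 2 * weight A r).
  { apply (fp_map_contraction (2 * M0 * (1 / 2) ^ k) fp_limit (iterate k)); auto.
    - apply Rmult_le_pos; [lra | apply pow_le; lra].
    - apply fp_limit_continuous.
    - apply iterate_continuous_odd.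
    - intros t Ht. assert (H := fp_limit_approx k t). rewrite (Rabs_right t) in H by lra. exact H. }
  assert (S2 := fp_limit_approx (S k) r).
  rewrite (Rabs_right r), Rabs_minus_sym in S2 by lra.
  change (iterate (S k) r) with (fp_map (iterate k) r) in S2.
  assert (T := Rabs_triang (fp_map fp_limit r - fp_map (iterate k) r)
                           (fp_map (iterate k) r - fp_limit r)).
  replace (fp_map fp_limit r - fp_map (iterate k) r + (fp_map (iterate k) r - fp_limit r))
    with (fp_map fp_limit r - fp_limit r) in T by ring.
  replace ((1 / 2) ^ S k) with ((1 / 2) ^ k / 2) in S2 by (simpl; field).
  lra.
Qed.

Lemma fixed_point_exists : exists W, Cn 0 W /\ odd_fun W /\ (forall r, W r = fp_map W r) /\
  (forall t, 0 <= t -> Rabs (W t - W0 t) <= 2 * M0 * weight A t).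
Proof.
  exists fp_limit. split; [apply fp_limit_continuous | split; [apply fp_limit_odd | split]].
  - apply fp_limit_fixed.
  - intros t Ht. assert (H := fp_limit_approx 0 t). rewrite (Rabs_right t) in H by lra.
    rewrite pow_O, Rmult_1_r in H. exact H.
Qed.

End WeightedContraction.

(** * The truncated nonlinearity *)

Lemma Rmax_eq_abs a b : Rmax a b = (a + b + Rabs (a - b)) / 2.
Proof. unfold Rmax. destruct (Rle_dec a b); unfold Rabs; destruct (Rcase_abs (a - b)); lra. Qed.

Lemma Rmax_lipschitz x y c : Rabs (Rmax x c - Rmax y c) <= Rabs (x - y).
Proof.
  rewrite !Rmax_eq_abs.
  replace ((x + c + Rabs (x - c)) / 2 - (y + c + Rabs (y - c)) / 2)
    with (((x - y) + (Rabs (x - c) - Rabs (y - c))) / 2) by field.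
  assert (H := Rabs_triang_inv2 (x - c) (y - c)). replace (x - c - (y - c)) with (x - y) in H by ring.
  assert (H2 := Rabs_triang (x - y) (Rabs (x - c) - Rabs (y - c))).
  unfold Rdiv. rewrite Rabs_mult, (Rabs_right (/ 2)) by lra. lra.
Qed.

Lemma continuous_Rmax_comp (f g : R -> R) x : continuous f x -> continuous g x ->
  continuous (fun y => Rmax (f y) (g y)) x.
Proof.
  intros Hf Hg. apply (continuous_ext (fun y => (f y + g y + Rabs (f y - g y)) * / 2)).
  - intros; rewrite Rmax_eq_abs; reflexivity.
  - apply (continuous_mult (fun y => f y + g y + Rabs (f y - g y)) (fun _ => / 2));
      [|apply continuous_const].
    apply (continuous_plus (fun y => f y + g y)); [apply (continuous_plus f g); auto|].
    apply continuous_Rabs_comp, (continuous_minus (V := R_NormedModule) f g); auto.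
Qed.

Lemma inv_cube_lipschitz p q h : 0 < h -> h <= p -> h <= q ->
  Rabs (/ p ^ 3 - / q ^ 3) <= 3 / h ^ 4 * Rabs (p - q).
Proof.
  intros Hh Hp Hq.
  assert (E : / p ^ 3 - / q ^ 3 = (q - p) * (/ (p ^ 3 * q) + / (p ^ 2 * q ^ 2) + / (p * q ^ 3)))
    by (field; lra).
  rewrite E, Rabs_mult, <- Rabs_Ropp, Ropp_minus_distr, Rmult_comm.
  apply Rmult_le_compat_r; [apply Rabs_pos|].
  assert (Inv : forall a b, h ^ 4 <= a * b -> / (a * b) <= / h ^ 4 /\ 0 < / (a * b)).
  { intros a b Hab. assert (0 < h ^ 4) by (apply pow_lt; lra).
    split; [apply Rinv_le_contravar; lra | apply Rinv_0_lt_compat; lra]. }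
  assert (h2 : h ^ 2 <= p ^ 2 /\ h ^ 3 <= p ^ 3 /\ h ^ 2 <= q ^ 2 /\ h ^ 3 <= q ^ 3)
    by (repeat split; apply pow_incr; lra).
  assert (0 < h ^ 2) by (apply pow_lt; lra). assert (0 < h ^ 3) by (apply pow_lt; lra).
  destruct (Inv (p ^ 3) q) as [X1 P1].
  { replace (h ^ 4) with (h ^ 3 * h) by ring. apply Rmult_le_compat; lra. }
  destruct (Inv (p ^ 2) (q ^ 2)) as [X2 P2].
  { replace (h ^ 4) with (h ^ 2 * h ^ 2) by ring. apply Rmult_le_compat; lra. }
  destruct (Inv p (q ^ 3)) as [X3 P3].
  { replace (h ^ 4) with (h * h ^ 3) by ring. apply Rmult_le_compat; lra. }
  rewrite Rabs_right by lra. unfold Rdiv. lra.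
Qed.

(* The nonlinearity [t * (-(W t / t)^-3)] of the equation for [W = r v], with
   [W t / t] truncated from below at [u t / 2] so that it is globally Lipschitz
   in [W]; at [t = 0] the junk value [W 0 / 0] is killed by the factor [t]. *)
Definition rhs_trunc (u : R -> R) (t x : R) : R := - / Rmax x (u t / 2) ^ 3.

Definition Phi (u W : R -> R) (t : R) : R := t * rhs_trunc u t (W t / t).

Lemma rhs_trunc_lipschitz u t x y : 0 < u t ->
  Rabs (rhs_trunc u t x - rhs_trunc u t y) <= 48 / u t ^ 4 * Rabs (x - y).
Proof.
  intros Hu. unfold rhs_trunc.
  replace (- / Rmax x (u t / 2) ^ 3 - - / Rmax y (u t / 2) ^ 3)
    with (- (/ Rmax x (u t / 2) ^ 3 - / Rmax y (u t / 2) ^ 3)) by ring.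
  rewrite Rabs_Ropp. eapply Rle_trans.
  - apply (inv_cube_lipschitz _ _ (u t / 2)); [lra | apply Rmax_r | apply Rmax_r].
  - replace (3 / (u t / 2) ^ 4) with (48 / u t ^ 4) by (field; lra).
    apply Rmult_le_compat_l; [|apply Rmax_lipschitz].
    apply Rlt_le, Rdiv_lt_0_compat; [lra | apply pow_lt; auto].
Qed.

Lemma rhs_trunc_bound u t x : 0 < u t -> Rabs (rhs_trunc u t x) <= 8 / u t ^ 3.
Proof.
  intros Hu. unfold rhs_trunc. rewrite Rabs_Ropp.
  assert (H := Rmax_r x (u t / 2)).
  assert (0 < (u t / 2) ^ 3) by (apply pow_lt; lra).
  assert ((u t / 2) ^ 3 <= Rmax x (u t / 2) ^ 3) by (apply pow_incr; lra).
  rewrite Rabs_right by (apply Rle_ge, Rlt_le, Rinv_0_lt_compat; lra).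
  replace (8 / u t ^ 3) with (/ (u t / 2) ^ 3) by (field; lra).
  apply Rinv_le_contravar; auto.
Qed.

Lemma Phi_lipschitz u W W' t : 0 < u t ->
  Rabs (Phi u W t - Phi u W' t) <= 48 / u t ^ 4 * Rabs (W t - W' t).
Proof.
  intros Hu. unfold Phi. destruct (Req_dec t 0) as [->|Ht].
  - rewrite !Rmult_0_l, Rminus_0_r, Rabs_R0.
    apply Rmult_le_pos; [|apply Rabs_pos]. apply Rlt_le, Rdiv_lt_0_compat; [lra | apply pow_lt; auto].
  - rewrite <- Rmult_minus_distr_l, Rabs_mult.
    eapply Rle_trans; [apply Rmult_le_compat_l; [apply Rabs_pos | apply rhs_trunc_lipschitz; auto]|].
    replace (W t / t - W' t / t) with ((W t - W' t) / t) by (field; auto).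
    unfold Rdiv. rewrite Rabs_mult, Rabs_inv. right. field. split; [lra | apply Rabs_no_R0; auto].
Qed.

Lemma Phi_odd u W : even_fun u -> odd_fun W -> odd_fun (Phi u W).
Proof.
  intros He Ho t. unfold Phi, rhs_trunc. destruct (Req_dec t 0) as [->|Ht].
  - rewrite Ropp_0. ring.
  - rewrite He, Ho. replace (- W t / - t) with (W t / t) by (field; auto). ring.
Qed.

Lemma continuous_mul_id_0 (g : R -> R) K : (forall y, Rabs (g y) <= K) -> continuous (mul_id g) 0.
Proof.
  intros Hg. apply continuity_pt_filterlim, continuity_pt_locally. intros eps.
  assert (HK : 0 <= K) by (eapply Rle_trans; [apply Rabs_pos | apply (Hg 0)]).
  assert (Hd : 0 < eps / (K + 1)) by (apply Rdiv_lt_0_compat; [apply cond_pos | lra]).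
  exists (mkposreal _ Hd). intros y Hy. change (Rabs (y - 0) < eps / (K + 1)) in Hy.
  unfold mul_id. rewrite Rmult_0_l, !Rminus_0_r, Rabs_mult. rewrite Rminus_0_r in Hy.
  assert (Rabs y * (K + 1) < eps).
  { replace (pos eps) with (eps / (K + 1) * (K + 1)) by (field; lra).
    apply Rmult_lt_compat_r; lra. }
  assert (Rabs y * Rabs (g y) <= Rabs y * K) by (apply Rmult_le_compat_l; [apply Rabs_pos | auto]).
  pose proof (Rabs_pos y). nra.
Qed.

Lemma Phi_continuous u W m : 0 < m -> (forall t, m <= u t) -> Cn 0 u -> Cn 0 W -> Cn 0 (Phi u W).
Proof.
  intros Hm Hum Cu CW t.
  assert (Hu : forall t, 0 < u t) by (intros s; specialize (Hum s); lra).
  destruct (Req_dec t 0) as [->|Ht].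
  - apply (continuous_mul_id_0 _ (8 / m ^ 3)). intros y.
    eapply Rle_trans; [apply rhs_trunc_bound; auto|].
    unfold Rdiv. apply Rmult_le_compat_l; [lra|].
    apply Rinv_le_contravar; [apply pow_lt; lra | apply pow_incr; split; [lra | auto]].
  - unfold Phi.
    apply (continuous_mult (fun y => y) (fun y => rhs_trunc u y (W y / y))); [apply continuous_id|].
    unfold rhs_trunc.
    apply (continuous_comp (fun y => Rmax (W y / y) (u y / 2)) (fun z => - / z ^ 3)).
    2: { assert (H := Rmax_r (W t / t) (u t / 2)). specialize (Hu t).
         apply continuous_of_ex_derive. auto_derive. simpl. apply Rgt_not_eq.
         repeat apply Rmult_lt_0_compat; lra. }
    apply continuous_Rmax_comp.
    + apply (continuous_mult W (fun y => / y)); [auto | apply continuous_Rinv; auto].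
    + apply (continuous_mult u (fun _ => / 2)); auto. apply continuous_const.
Qed.

(** * Construction of the perturbed solution *)

Lemma Derive_n_plus_Cn n f g k x : Cn n f -> Cn n g -> (k <= n)%nat ->
  Derive_n (fun y => f y + g y) k x = Derive_n f k x + Derive_n g k x.
Proof.
  intros Hf Hg Hk. apply Derive_n_plus; apply filter_forall; intros y j Hj;
    [apply (Cn_ex_derive_n n f) | apply (Cn_ex_derive_n n g)]; auto; lia.
Qed.

Lemma Derive_n_minus_Cn n f g k x : Cn n f -> Cn n g -> (k <= n)%nat ->
  Derive_n (fun y => f y - g y) k x = Derive_n f k x - Derive_n g k x.
Proof.
  intros Hf Hg Hk. apply Derive_n_minus; apply filter_forall; intros y j Hj;
    [apply (Cn_ex_derive_n n f) | apply (Cn_ex_derive_n n g)]; auto; lia.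
Qed.

Lemma lipschitz_weight_bound m U t : 0 < m -> 0 <= t -> m * (1 + t) ^ 4 <= U ->
  0 <= 48 / U ^ 4 /\ 48 / U ^ 4 * (t * (1 + t) ^ 4) <= 48 / m ^ 4 / (1 + t ^ 2).
Proof.
  intros Hm Ht HU. set (s := 1 + t) in *.
  assert (s1 : 1 <= s) by (unfold s; lra).
  assert (Hs16 : 0 < s ^ 16) by (apply pow_lt; lra).
  assert (Hm4 : 0 < m ^ 4) by (apply pow_lt; lra).
  assert (Hms : 0 < m * s ^ 4) by (apply Rmult_lt_0_compat; [lra | apply pow_lt; lra]).
  assert (HU4 : (m * s ^ 4) ^ 4 <= U ^ 4) by (apply pow_incr; split; lra).
  replace ((m * s ^ 4) ^ 4) with (m ^ 4 * s ^ 16) in HU4 by ring.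
  assert (Hms16 : 0 < m ^ 4 * s ^ 16) by (apply Rmult_lt_0_compat; auto).
  split; [apply Rlt_le, Rdiv_lt_0_compat; lra|].
  assert (HX : t * s ^ 4 * (1 + t ^ 2) <= s ^ 16).
  { assert (t * s ^ 4 * (1 + t ^ 2) <= s * s ^ 4 * s ^ 2).
    { apply Rmult_le_compat; [apply Rmult_le_pos; [auto | apply pow_le; lra] | nra | |].
      - apply Rmult_le_compat_r; [apply pow_le; lra | unfold s; lra].
      - unfold s; nra. }
    assert (s ^ 7 <= s ^ 16) by (apply Rle_pow; auto; lia).
    replace (s * s ^ 4 * s ^ 2) with (s ^ 7) in H by ring. lra. }
  assert (Ht2 : 0 < 1 + t ^ 2) by nra.
  assert (L1 : 48 / U ^ 4 <= 48 / (m ^ 4 * s ^ 16)).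
  { unfold Rdiv. apply Rmult_le_compat_l; [lra | apply Rinv_le_contravar; lra]. }
  assert (X0 : 0 <= t * s ^ 4) by (apply Rmult_le_pos; [auto | apply pow_le; lra]).
  apply (Rmult_le_reg_r (1 + t ^ 2)); auto.
  replace (48 / m ^ 4 / (1 + t ^ 2) * (1 + t ^ 2)) with (48 / (m ^ 4 * s ^ 16) * s ^ 16)
    by (field; lra).
  rewrite Rmult_assoc.
  apply Rmult_le_compat; [apply Rlt_le, Rdiv_lt_0_compat; lra | apply Rmult_le_pos; lra | auto | auto].
Qed.

Section Perturbation.

Variables (u : R -> R) (m : R).
Hypothesis u_solution : pos_entire_radial_solution u.
Hypothesis m_pos : 0 < m.
Hypothesis u_ge : forall r, m * (1 + Rabs r) ^ 4 <= u r.

Let A : R := 48 / m ^ 4.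
(* Since [atan < 2], [exp_atan A <= exp (2 A)]; this makes
   [2 delta (weight A t) <= t u(t) / 2], keeping the fixed point in the region where
   the truncation in [Phi] is inactive. *)
Let delta : R := m / (4 * exp (2 * A)).
Let W0 : R -> R := mul_id u.
Let Q0 (r : R) : R := W0 r - primn 6 (Phi u W0) r - delta * r ^ 3.

Lemma A_pos : 0 < A.
Proof. apply Rdiv_lt_0_compat; [lra | apply pow_lt; lra]. Qed.

Lemma delta_pos : 0 < delta.
Proof. apply Rdiv_lt_0_compat; [lra | assert (H := exp_pos (2 * A)); lra]. Qed.

Lemma u_ge_m t : m <= u t.
Proof.
  eapply Rle_trans; [|apply u_ge].
  assert (1 <= (1 + Rabs t) ^ 4) by (apply pow_R1_Rle; pose proof (Rabs_pos t); lra).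
  nra.
Qed.

Lemma u_pos t : 0 < u t.
Proof. assert (H := u_ge_m t). lra. Qed.

Lemma smooth_W0 : smooth W0.
Proof. apply smooth_mul_id. apply u_solution. Qed.

Lemma Phi_W0 t : Phi u W0 t = Nat.iter 3 D2 W0 t.
Proof.
  unfold W0. rewrite iter_D2_mul_id_of_solution by auto. unfold Phi, rhs_trunc, mul_id.
  destruct (Req_dec t 0) as [->|Ht]; [unfold Rdiv; ring|].
  replace (t * u t / t) with (u t) by (field; auto).
  rewrite Rmax_left by (assert (H := u_pos t); lra). unfold Rdiv. ring.
Qed.

Lemma Cn_Q0 n : Cn n Q0.
Proof.
  apply Cn_minus; [apply Cn_minus | apply Cn_scal, Cn_pow].
  - apply Cn_of_smooth, smooth_W0.
  - apply (Cn_le n (6 + n)); [lia|]. apply Cn_primn.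
    apply (Cn_ext n (Nat.iter 3 D2 W0)); [intros; symmetry; apply Phi_W0|].
    apply Cn_of_smooth, smooth_iter_D2, smooth_W0.
Qed.

Lemma odd_Q0 : odd_fun Q0.
Proof.
  destruct u_solution as [He [Hs _]].
  assert (O0 : odd_fun W0) by (apply odd_mul_id; auto).
  assert (O6 : odd_fun (primn 6 (Phi u W0))).
  { apply (odd_primn_double 3); [apply (Phi_continuous u W0 m) | apply Phi_odd]; auto.
    - apply u_ge_m.
    - apply Cn_of_smooth; auto.
    - apply Cn_of_smooth, smooth_W0. }
  intros r. unfold Q0. rewrite O0, O6. ring.
Qed.

Lemma W0_step t : 0 <= t -> Rabs (fp_map (Phi u) Q0 W0 t - W0 t) <= delta * weight A t.
Proof.
  intros Ht. assert (Hd := delta_pos). unfold fp_map, Q0.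
  replace (W0 t - primn 6 (Phi u W0) t - delta * t ^ 3 + primn 6 (Phi u W0) t - W0 t)
    with (- (delta * t ^ 3)) by ring.
  rewrite Rabs_Ropp, Rabs_right by (apply Rle_ge, Rmult_le_pos; [lra | apply pow_le; lra]).
  apply Rmult_le_compat_l; [lra|]. unfold weight.
  assert (1 <= exp_atan A t) by (apply exp_atan_ge_1; [apply Rlt_le, A_pos | lra]).
  assert (t ^ 3 <= t * (1 + t) ^ 4).
  { replace (t ^ 3) with (t * t ^ 2) by ring. apply Rmult_le_compat_l; auto.
    assert (t ^ 2 <= (1 + t) ^ 2) by (apply pow_incr; lra).
    assert ((1 + t) ^ 2 <= (1 + t) ^ 4) by (apply Rle_pow; [lra | lia]). lra. }
  assert (0 <= t * (1 + t) ^ 4) by (apply Rmult_le_pos; [auto | apply pow_le; lra]).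
  nra.
Qed.

Lemma fixed_point_near_W0 : exists W, Cn 0 W /\ odd_fun W /\
  (forall r, W r = fp_map (Phi u) Q0 W r) /\
  (forall t, 0 <= t -> Rabs (W t - W0 t) <= 2 * delta * weight A t).
Proof.
  destruct u_solution as [He [Hs _]].
  assert (HPc : forall W, Cn 0 W -> Cn 0 (Phi u W)).
  { intros W CW. apply (Phi_continuous u W m); auto; [apply u_ge_m | apply Cn_of_smooth; auto]. }
  assert (HPo : forall W, Cn 0 W -> odd_fun W -> odd_fun (Phi u W))
    by (intros W _ OW; apply Phi_odd; auto).
  assert (HL : forall t, 0 <= t ->
    0 <= 48 / u t ^ 4 /\ 48 / u t ^ 4 * (t * (1 + t) ^ 4) <= A / (1 + t ^ 2)).
  { intros t Ht. apply lipschitz_weight_bound; auto.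
    assert (H := u_ge t). rewrite Rabs_right in H by lra. exact H. }
  exact (fixed_point_exists (Phi u) (fun t => 48 / u t ^ 4) A Q0 (Rlt_le _ _ A_pos) HPc HPo
    (fun W W' t => Phi_lipschitz u W W' t (u_pos t)) HL (Cn_Q0 0) odd_Q0 W0 delta
    (Rlt_le _ _ delta_pos) (Cn_of_smooth 0 W0 smooth_W0) (odd_mul_id u He) W0_step).
Qed.

Section FixedPoint.

Variable W : R -> R.
Hypothesis W_continuous : Cn 0 W.
Hypothesis W_odd : odd_fun W.
Hypothesis W_fixed : forall r, W r = fp_map (Phi u) Q0 W r.
Hypothesis W_close : forall t, 0 <= t -> Rabs (W t - W0 t) <= 2 * delta * weight A t.

Lemma Cn_Phi V : Cn 0 V -> Cn 0 (Phi u V).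
Proof.
  intros CV. apply (Phi_continuous u V m); auto; [apply u_ge_m | apply Cn_of_smooth, u_solution].
Qed.

Lemma W_decomp r : W r = W0 r - delta * r ^ 3 + primn 6 (fun t => Phi u W t - Phi u W0 t) r.
Proof.
  rewrite W_fixed. unfold fp_map, Q0.
  rewrite primn_minus by (apply Cn_Phi; auto; apply Cn_of_smooth, smooth_W0). ring.
Qed.

Lemma Cn6_W : Cn 6 W.
Proof.
  apply (Cn_ext 6 (fun r => Q0 r + primn 6 (Phi u W) r)); [intros; symmetry; apply W_fixed|].
  apply Cn_plus; [apply Cn_Q0 | apply (Cn_primn 6 0), Cn_Phi; auto].
Qed.

Lemma W_jet j : (j <= 5)%nat ->
  Derive_n W j 0 = Derive_n W0 j 0 - delta * Derive_n (fun r => r ^ 3) j 0.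
Proof.
  intros Hj. set (chi := fun t => Phi u W t - Phi u W0 t).
  assert (Cchi : Cn 0 chi) by (apply Cn_minus; apply Cn_Phi; auto; apply Cn_of_smooth, smooth_W0).
  rewrite (Derive_n_ext _ _ j 0 W_decomp).
  rewrite (Derive_n_plus_Cn 6), (Derive_n_minus_Cn 6), Derive_n_scal_l, (Derive_n_primn 6 j);
    auto; try lia.
  - replace (6 - j)%nat with (S (5 - j)) by lia. simpl. rewrite prim_0. ring.
  - apply Cn_of_smooth, smooth_W0.
  - apply Cn_scal, Cn_pow.
  - apply Cn_minus; [apply Cn_of_smooth, smooth_W0 | apply Cn_scal, Cn_pow].
  - apply (Cn_primn 6 0); auto.
Qed.

Lemma W_over_t_ge t : t <> 0 -> u t / 2 <= W t / t.
Proof.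
  enough (Hpos : forall s, 0 < s -> u s / 2 <= W s / s).
  { intros Ht. destruct (Rle_or_lt 0 t); [apply Hpos; lra|].
    replace (W t / t) with (W (- t) / - t) by (rewrite W_odd; field; auto).
    rewrite <- (proj1 u_solution t). apply Hpos; lra. }
  intros s Hs. assert (Hd := delta_pos). assert (He := exp_pos (2 * A)).
  assert (B := W_close s (Rlt_le _ _ Hs)). unfold weight, W0, mul_id in B.
  assert (Hexp : exp_atan A s <= exp (2 * A)).
  { unfold exp_atan. apply Rlt_le, exp_increasing. rewrite (Rmult_comm 2 A).
    apply Rmult_lt_compat_l; [apply A_pos|]. destruct (atan_bound s). pose proof PI_4. lra. }
  assert (Hu : m * (1 + s) ^ 4 <= u s).
  { assert (H := u_ge s). rewrite Rabs_right in H by lra. exact H. }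
  assert (Hs4 : 0 <= s * (1 + s) ^ 4) by (apply Rmult_le_pos; [lra | apply pow_le; lra]).
  assert (B2 : 2 * delta * (s * (1 + s) ^ 4 * exp_atan A s) <= s * u s / 2).
  { apply Rle_trans with (2 * delta * (s * (1 + s) ^ 4 * exp (2 * A))).
    - apply Rmult_le_compat_l; [lra | apply Rmult_le_compat_l; auto].
    - replace (2 * delta * (s * (1 + s) ^ 4 * exp (2 * A))) with (s * (m * (1 + s) ^ 4) / 2)
        by (unfold delta; field; lra).
      nra. }
  assert (B3 := Rabs_maj2 (W s - s * u s)).
  apply (Rmult_le_reg_r s); auto. replace (W s / s * s) with (W s) by (field; lra). lra.
Qed.

Lemma mul_divq_W r : r * divq W r = W r.
Proof. apply mul_divq_odd; auto. apply (Cn_le 1 6); [lia | apply Cn6_W]. Qed.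

Lemma divq_W_pos r : 0 < divq W r.
Proof.
  destruct (Req_dec r 0) as [->|Hr].
  - rewrite divq_0. change (Derive W 0) with (Derive_n W 1 0).
    rewrite W_jet, Derive_n_pow_smalli by lia.
    replace (0 ^ (3 - 1)) with 0 by (simpl; ring).
    change (Derive_n W0 1 0) with (Derive (mul_id u) 0).
    rewrite <- divq_0, divq_mul_id by apply u_solution.
    rewrite !Rmult_0_r, Rminus_0_r. apply u_pos.
  - replace (divq W r) with (W r / r) by (rewrite <- mul_divq_W; field; auto).
    assert (H := W_over_t_ge r Hr). assert (H' := u_pos r). lra.
Qed.

Lemma Phi_W t : Phi u W t = - t / divq W t ^ 3.
Proof.
  unfold Phi, rhs_trunc. destruct (Req_dec t 0) as [->|Ht]; [unfold Rdiv; ring|].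
  rewrite Rmax_left by (apply W_over_t_ge; auto).
  replace (W t / t) with (divq W t) by (rewrite <- mul_divq_W; field; auto).
  unfold Rdiv. ring.
Qed.

Lemma smooth_W : smooth W.
Proof.
  apply smooth_of_Cn. intros n. apply (Cn_le n (S (S n))); [lia|].
  induction n; [apply (Cn_le 2 6); [lia | apply Cn6_W]|].
  assert (CPhi : Cn n (Phi u W)).
  { assert (CV : Cn n (divq W)) by (apply Cn_divq; auto).
    apply (Cn_ext n (fun t => (-1 * t) * / (divq W t * (divq W t * divq W t)))).
    - intros t. rewrite Phi_W. unfold Rdiv. simpl. rewrite Rmult_1_r. ring.
    - apply Cn_mult; [apply Cn_scal, Cn_id|].
      apply Cn_inv; [|repeat apply Cn_mult; auto].
      intros t. assert (H := divq_W_pos t). apply Rgt_not_eq. repeat apply Rmult_lt_0_compat; auto. }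
  apply (Cn_le (S (S (S n))) (6 + n)); [lia|].
  apply (Cn_ext (6 + n) (fun r => Q0 r + primn 6 (Phi u W) r)); [intros; symmetry; apply W_fixed|].
  apply Cn_plus; [apply Cn_Q0 | apply Cn_primn; auto].
Qed.

Lemma W_sixth t : Nat.iter 3 D2 W t = - t / divq W t ^ 3.
Proof.
  set (chi := fun t => Phi u W t - Phi u W0 t).
  assert (Cchi : Cn 0 chi) by (apply Cn_minus; apply Cn_Phi; auto; apply Cn_of_smooth, smooth_W0).
  change (Nat.iter 3 D2 W t) with (Derive_n W 6 t).
  rewrite (Derive_n_ext _ _ 6 t W_decomp).
  rewrite (Derive_n_plus_Cn 6), (Derive_n_minus_Cn 6), Derive_n_scal_l, (Derive_n_primn 6 6),
    Derive_n_pow_bigi; auto; try lia.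
  - rewrite Nat.sub_diag. change (primn 0 ?f t) with (f t). cbv beta.
    change (Derive_n W0 6 t) with (Nat.iter 3 D2 W0 t).
    rewrite <- Phi_W0, Phi_W. ring.
  - apply Cn_of_smooth, smooth_W0.
  - apply Cn_scal, Cn_pow.
  - apply Cn_minus; [apply Cn_of_smooth, smooth_W0 | apply Cn_scal, Cn_pow].
  - apply (Cn_primn 6 0); auto.
Qed.

End FixedPoint.

Lemma perturbed_solution : exists W d, 0 < d /\ smooth W /\ odd_fun W /\
  (forall r, 0 < divq W r) /\ (forall r, Nat.iter 3 D2 W r = - r / divq W r ^ 3) /\
  (forall j, (j <= 5)%nat ->
     Derive_n W j 0 = Derive_n (mul_id u) j 0 - d * Derive_n (fun r => r ^ 3) j 0).
Proof.
  destruct fixed_point_near_W0 as [W [CW [OW [FW BW]]]].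
  exists W, delta. split; [apply delta_pos|].
  split; [eapply smooth_W; eauto|]. split; [auto|].
  split; [intros; eapply divq_W_pos; eauto|]. split; [intros; eapply W_sixth; eauto|].
  intros j Hj. eapply W_jet; eauto.
Qed.
End Perturbation.

Theorem lemma4 (u : R -> R) :
  pos_entire_radial_solution u ->
  (exists l : R, is_lim (radLap (radLap u)) p_infty l /\ 0 < l) ->
  exists v : R -> R,
    pos_entire_radial_solution v /\
    v 0 = u 0 /\
    radLap v 0 < radLap u 0 /\
    radLap (radLap v) 0 = radLap (radLap u) 0.
Proof.
  intros Hu Hl.
  destruct (solution_quartic_lower_bound u Hu Hl) as [m [Hm Hmu]].
  destruct (perturbed_solution u m Hu Hm Hmu) as [W [d [Hd [SW [OW [Vpos [H6 Hjet]]]]]]].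
  assert (Lap_v : forall k, (k <= 2)%nat -> Nat.iter k radLap (divq W) 0 =
    Nat.iter k radLap u 0 - d * Derive_n (fun r => r ^ 3) (S (2 * k)) 0).
  { intros k Hk.
    rewrite radLap_iter_divq, (solution_radLap_iter k u Hu), !divq_iter_D2_0, Hjet by (auto; lia).
    reflexivity. }
  exists (divq W). split; [apply solution_of_iter_D2_divq; auto|].
  split; [|split].
  - change (Nat.iter 0 radLap (divq W) 0 = Nat.iter 0 radLap u 0).
    rewrite Lap_v, Derive_n_pow_smalli by lia. simpl. ring.
  - change (Nat.iter 1 radLap (divq W) 0 < Nat.iter 1 radLap u 0).
    rewrite Lap_v, Derive_n_pow_smalli by lia. simpl. lra.
  - change (Nat.iter 2 radLap (divq W) 0 = Nat.iter 2 radLap u 0).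
    rewrite Lap_v, Derive_n_pow_bigi by lia. ring.
Qed.
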